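(* Let $T$ be a tree with positive edge weights rooted at the homebase $r$, in which no vertex other than $r$ has exactly one child, and let $q\ge 0$. Define labels $\Lambda_v=(\Lambda_v.k,\Lambda_v.u_l,\Lambda_v.u_c)$ for all $v\in V(T)$ recursively from the leaves up (procedure SetLabeling): for a leaf $v$, $\Lambda_v=(1,v,\mathrm{null})$; for a non-leaf $v$, with $d_r=d(r,v)+q$, $$\Lambda_v.k=\max\Big\{1,\ \sum_{u\in c(v)}\big(\Lambda_u.k-\mathbb{1}[\Lambda_u.k=1 \text{ and } d(v,\Lambda_u.u_l)\le d_r]\big)\Big\},$$ $\Lambda_v.u_c$ is a child $u$ of $v$ maximizing $d(v,\Lambda_u.u_l)$, and $\Lambda_v.u_l=\Lambda_{\Lambda_v.u_c}.u_l$. Then for every $v\in V(T)$, every cost-optimal strategy exploring $T$ uses at least $\Lambda_v.k$ agents to explore $T_v$ (i.e., at least $\Lambda_v.k$ agents visit vertices of $T_v$).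
   Context: Exploration model: given a connected graph with positive edge weights, a homebase vertex, and invoking cost $q\ge 0$, a strategy is a sequence of moves, each either invoking a new agent (appearing at the homebase) or an agent traversing an edge incident to its current vertex. A vertex is explored when first visited; the strategy explores the graph when every vertex has been visited by some agent (agents need not return). With $k$ agents, agent $i$ traversing total distance $d_i$ (weights counted with multiplicity), the cost is $kq+\sum_i d_i$; a strategy is cost-optimal if it explores the graph with minimum cost (off-line setting). For the rooted tree: $c(v)$ is the set of children of $v$, $T_v$ the subtree of $v$ and its descendants, a leaf is a non-root vertex with no children, and $d(\cdot,\cdot)$ is weighted distance. *)

From mathcomp Require Import all_boot all_order all_algebra.
Set Implicit Arguments. Unset Strict Implicit. Unset Printing Implicit Defensive.
Import Order.TTheory GRing.Theory Num.Theory.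
Local Open Scope ring_scope.

(* A rooted weighted tree on a finite vertex type V is given by a root r,
   a parent function (parent r = r) and a weight function w : w x is the
   weight of the edge {x, parent x} for x <> r. *)
Section Tree.
Variables (R : realFieldType) (V : finType) (r : V) (parent : V -> V) (w : V -> R).

(* v is an ancestor of u (reflexive): u \in T_v *)
Definition anc (v u : V) : bool := [exists n : 'I_#|V|, iter n parent u == v].

Definition rooted_tree : Prop :=
  parent r = r /\ (forall x, anc r x) /\ (forall x, x != r -> 0 < w x).

Definition child (u v : V) : bool := (u != r) && (parent u == v).
Definition is_leaf (v : V) : bool := (v != r) && [forall u, ~~ child u v].

Fixpoint depth_aux (n : nat) (x : V) : R :=
  if n is n'.+1 then (if x == r then 0 else w x + depth_aux n' (parent x)) else 0.
Definition depth (x : V) : R := depth_aux #|V| x.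
(* d(v, u) for u a descendant of v *)
Definition dist_desc (v u : V) : R := depth u - depth v.

Definition adj (x y : V) : bool := child y x || child x y.
Definition ew (x y : V) : R := if child y x then w y else w x.

Inductive move := Invoke | Step of nat & V.

(* a trace records, for every invoked agent (in invocation order), the
   sequence of vertices it occupied *)
Definition step (tr : seq (seq V)) (m : move) : option (seq (seq V)) :=
  match m with
  | Invoke => Some (rcons tr [:: r])
  | Step i u =>
      if (i < size tr)%N && adj (last r (nth [::] tr i)) u
      then Some (set_nth [::] tr i (rcons (nth [::] tr i) u))
      else None
  end.

Fixpoint run (tr : seq (seq V)) (s : seq move) : option (seq (seq V)) :=
  match s with
  | [::] => Some tr
  | m :: s' => match step tr m with Some tr' => run tr' s' | None => None end
  end.

Definition path_len (t : seq V) : R :=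
  match t with [::] => 0 | x :: t' => \sum_(e <- pairmap ew x t') e end.

Definition cost (q : R) (tr : seq (seq V)) : R :=
  (size tr)%:R * q + \sum_(t <- tr) path_len t.

Definition covers (tr : seq (seq V)) : Prop :=
  forall x : V, exists2 t, t \in tr & x \in t.

Definition cost_optimal (q : R) (s : seq move) (tr : seq (seq V)) : Prop :=
  run [::] s = Some tr /\ covers tr /\
  forall s' tr', run [::] s' = Some tr' -> covers tr' -> cost q tr <= cost q tr'.

Definition agents_in (v : V) (tr : seq (seq V)) : nat :=
  count (fun t => has (anc v) t) tr.

(* Lk, Ll, Lc is a labeling produced by SetLabeling (any tie-breaking) *)
Definition is_labeling (q : R) (Lk : V -> nat) (Ll : V -> V) (Lc : V -> option V) : Prop :=
  (forall v, is_leaf v -> [/\ Lk v = 1%N, Ll v = v & Lc v = None]) /\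
  (forall v, ~~ is_leaf v ->
     Lk v = maxn 1 (\sum_(u | child u v)
              (Lk u - ((Lk u == 1%N) && (dist_desc v (Ll u) <= depth v + q)%R))%N)) /\
  (forall v, ~~ is_leaf v -> (exists u, child u v) ->
     exists2 u, Lc v = Some u &
       [/\ child u v, Ll v = Ll u &
           forall u', child u' v -> dist_desc v (Ll u') <= dist_desc v (Ll u)]).

End Tree.

(* If the subtree T_u below v = parent u contains a vertex l with
   d(v, l) > d(r, v) + q, then some agent of a cost-optimal strategy stops
   inside T_u: otherwise an agent visiting l enters T_u through the edge vu
   and leaves it again, and replacing that excursion by a fresh agent that
   walks r -> v -> u and then the excursion, shortened so as to stop at l
   instead of returning to u, saves d(v, l) - d(r, v) - q > 0.  Hence an
   induction up the tree shows that at least the SetLabeling summand of u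
   many agents stop inside T_u, and all of them visit T_u. *)

From mathcomp Require Import all_boot all_order all_algebra.
From mathcomp Require Import lra zify.
Set Implicit Arguments. Unset Strict Implicit. Unset Printing Implicit Defensive.
Import Order.TTheory GRing.Theory Num.Theory.
Local Open Scope ring_scope.

Lemma all_set_nth (T : eqType) (P : pred T) (s : seq T) x0 i y :
  all P s -> P y -> (i < size s)%N -> all P (set_nth x0 s i y).
Proof.
move=> /allP Ps Py lti; apply/allP => z; rewrite set_nthE lti mem_cat inE.
by case/or3P => [/mem_take/Ps|/eqP->|/mem_drop/Ps].
Qed.

Section RootedTree.
Variables (V : finType) (r : V) (parent : V -> V).
Hypothesis parent_root : parent r = r.
Hypothesis anc_root : forall x, anc parent r x.

Local Notation anc := (anc parent).
Local Notation child := (child r parent).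
Local Notation adj := (adj r parent).

Lemma iter_parent_root n : iter n parent r = r.
Proof. by elim: n => //= n ->. Qed.

Lemma ancP u x : reflect (exists n, iter n parent x = u) (anc u x).
Proof.
apply: (iffP existsP) => [[n /eqP <-]|[n <-]]; first by exists (val n).
have /existsP[m /eqP xr] := anc_root x.
have [ltnV|leVn] := ltnP n #|V|; first by exists (Ordinal ltnV).
exists m; apply/eqP.
by rewrite -(subnK (ltnW (leq_trans (ltn_ord m) leVn))) iterD xr iter_parent_root.
Qed.

Lemma anc_refl u : anc u u.
Proof.
have V_gt0 : (0 < #|V|)%N by apply/card_gt0P; exists u.
by apply/existsP; exists (Ordinal V_gt0).
Qed.

Lemma anc_trans u v x : anc u v -> anc v x -> anc u x.
Proof.
by move=> /ancP[n <-] /ancP[m <-]; apply/ancP; exists (n + m)%N; rewrite iterD.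
Qed.

Lemma anc_total u v x : anc u x -> anc v x -> anc u v || anc v u.
Proof.
move=> /ancP[n <-] /ancP[m <-].
have [le_nm|le_mn] := leqP n m.
  by rewrite -(subnK le_nm) iterD; apply/orP; right; apply/ancP; exists (m - n)%N.
by rewrite -(subnK (ltnW le_mn)) iterD; apply/orP; left; apply/ancP; exists (n - m)%N.
Qed.

Lemma anc_parent u x : anc u x -> x != u -> anc u (parent x).
Proof.
move=> /ancP[[|n] <-] /=; first by rewrite eqxx.
by move=> _; apply/ancP; exists n; rewrite -iterSr.
Qed.

Lemma iter_parent_fixed x n : iter n.+1 parent x = x -> x = r.
Proof.
move=> xx; have /ancP[m xr] := anc_root x.
have iter_mul j : iter (j * n.+1) parent x = x.
  by elim: j => // j IH; rewrite mulSn iterD IH xx.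
by rewrite -(iter_mul m) -(subnK (leq_pmulr m (ltn0Sn n))) iterD xr iter_parent_root.
Qed.

Lemma anc_parentN c : c != r -> ~~ anc c (parent c).
Proof.
apply: contra => /ancP[n cc]; apply/eqP/(@iter_parent_fixed c n).
by rewrite iterSr.
Qed.

Lemma child_anc c a : child c a -> anc a c.
Proof. by case/andP=> _ /eqP <-; apply/ancP; exists 1%N. Qed.

Lemma child_parent c : c != r -> child c (parent c).
Proof. by move=> cr; rewrite /child cr eqxx. Qed.

Lemma child_asym c a : child c a -> ~~ child a c.
Proof.
case/andP=> cr /eqP ca; apply/negP => /andP[_ /eqP ac].
by move: cr; rewrite (@iter_parent_fixed c 1) ?eqxx //= ca ac.
Qed.

Lemma child_anc_unique c1 c2 u y :
  child c1 u -> child c2 u -> anc c1 y -> anc c2 y -> c1 = c2.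
Proof.
wlog c12 : c1 c2 / anc c1 c2 => [hwlog c1u c2u y1 y2|].
  have /orP[] := anc_total y1 y2 => [c12|c21]; first exact: hwlog.
  by apply/esym; apply: hwlog.
case/andP=> c1r /eqP c1u /andP[_ /eqP c2u] _ _; apply/eqP; apply: contraT => c21.
have := anc_parent c12 ltac:(by rewrite eq_sym).
by rewrite c2u -c1u (negPf (anc_parentN c1r)).
Qed.

Lemma anc_child_of a x : anc a x -> x != a -> exists2 c, child c a & anc c x.
Proof.
move=> /ancP ex xa.
have ex' : exists n, iter n parent x == a by case: ex => n <-; exists n.
case: (ex_minnP ex') => -[|n] /eqP nxa minn; first by move: xa; rewrite -nxa eqxx.
have cr : iter n parent x != r.
  apply: contraTneq (leqnn n) => nr; rewrite -ltnNge; apply: minn.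
  by rewrite -nxa iterS nr parent_root.
exists (iter n parent x); first by rewrite /child cr -iterS nxa eqxx.
by apply/ancP; exists n.
Qed.

Lemma sum_child_anc u y : (\sum_(c | child c u) anc c y <= anc u y)%N.
Proof.
have [c /andP[cu cy] | none] := pickP (fun c => child c u && anc c y); last first.
  by rewrite big1 // => c cu; have := none c; rewrite cu /= => ->.
rewrite (bigD1 c) //= cy big1 ?addn0 ?(anc_trans (child_anc cu)) //.
move=> c' /andP[c'u c'c]; case: (boolP (anc c' y)) => // c'y.
by rewrite (child_anc_unique c'u cu c'y cy) eqxx in c'c.
Qed.

Lemma subtree_ind (P : V -> Prop) :
  (forall u, (forall c, child c u -> P c) -> P u) -> forall u, P u.
Proof.
move=> IH u; have [n] := ubnP #|[set x | anc u x]|.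
elim: n u => // n IHn u ltun; apply: IH => c cu; apply: IHn.
rewrite -ltnS; apply: leq_trans ltun; rewrite ltnS; apply: proper_card.
apply/properP; split.
  by apply/subsetP => x; rewrite !inE; apply: anc_trans (child_anc cu).
exists u; rewrite inE ?anc_refl //.
by case/andP: cu => cr /eqP <-; exact: anc_parentN.
Qed.

Lemma adjC x y : adj x y = adj y x.
Proof. by rewrite /adj orbC. Qed.

Lemma adj_exit u x y : adj x y -> anc u y -> ~~ anc u x -> x = parent u /\ y = u.
Proof.
case/orP=> /andP[zr /eqP <-] uy uxN.
  by have [-> //|yu] := eqVneq y u; rewrite anc_parent in uxN.
by rewrite (anc_trans uy (child_anc (child_parent zr))) in uxN.
Qed.

Lemma walk_excursion u x s l :
  ~~ anc u x -> path adj x s -> ~~ anc u (last x s) -> l \in s -> anc u l ->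
  exists A F B, [/\ s = A ++ u :: F ++ parent u :: B, last x A = parent u,
                    last u F = u, all (anc u) F & l \in u :: F].
Proof.
have [n] := ubnP (size s); elim: n s x => // n IH [//|y s] x /= /ltnSE size_s.
move=> uxN /andP[xy ys] ulastN ls ul; have [uy|uyN] := boolP (anc u y); last first.
  have {}ls : l \in s.
    by move: ls; rewrite inE => /orP[/eqP lu|//]; rewrite -lu ul in uyN.
  have [A [F [B [-> lastA lastF uF lF]]]] := IH s y size_s uyN ys ulastN ls ul.
  by exists (y :: A), F, B.
have [xu yu] := adj_exit xy uy uxN; subst x y.
have exit_s : has (predC (anc u)) s.
  apply/hasP; exists (last u s) => //.
  have := mem_last u s; rewrite inE => /orP[/eqP lastu|//].
  by rewrite lastu anc_refl in ulastN.
move: size_s ys ulastN ls; case/split_find: exit_s => b F B ubN /hasPn uF.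
rewrite /= in ubN; rewrite cat_rcons size_cat cat_path last_cat /=.
move=> size_s /and3P[_ lb bB] ulastN ls.
have {}uF : all (anc u) F by apply/allP => z /uF /negPn.
have ulastF : anc u (last u F).
  by have := mem_last u F; rewrite inE => /orP[/eqP->|/(allP uF)]; rewrite ?anc_refl.
rewrite adjC in lb; have [bu lastF] := adj_exit lb ulastF ubN; subst b.
have [lF|lFN] := boolP (l \in u :: F); first by exists [::], F, B.
have lB : l \in B.
  move: ls lFN; rewrite -cat_cons mem_cat inE => /orP[-> //|/orP[/eqP lu|//]].
  by rewrite -lu ul in ubN.
have size_B : (size B < n)%N by lia.
have [A [F' [B' [-> lastA lastF' uF' lF']]]] := IH B _ size_B ubN bB ulastN lB ul.
exists (u :: F ++ parent u :: A), F', B'; split => //.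
- by rewrite /= -catA.
- by rewrite /= last_cat.
Qed.

Definition root_walk (t : seq V) : bool :=
  if t is x :: t' then (x == r) && path adj r t' else false.

Lemma step_root_walks tr m tr' :
  step r parent tr m = Some tr' -> all root_walk tr -> all root_walk tr'.
Proof.
case: m => [|i u] /=; first by move=> [<-] walks; rewrite all_rcons /= eqxx.
case: ifP => // /andP[lti adj_u] [<-] walks; apply: all_set_nth => //.
move: adj_u (allP walks _ (mem_nth [::] lti)); case: (nth [::] tr i) => // x t.
by move=> adj_u /andP[/eqP xr rt]; subst x; rewrite /= eqxx rcons_path rt.
Qed.

Lemma run_root_walks s tr : run r parent [::] s = Some tr -> all root_walk tr.
Proof.
have : all root_walk [::] by [].
elim: s [::] => [|m s IH] tr0 /= walks0; first by move=> [<-].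
by case E: step => [tr1|] // /IH; apply; apply: step_root_walks E walks0.
Qed.

Lemma run_cat tr0 s1 s2 : run r parent tr0 (s1 ++ s2) =
  if run r parent tr0 s1 is Some tr1 then run r parent tr1 s2 else None.
Proof. by elim: s1 tr0 => [|m s1 IH] tr0 //=; case: step. Qed.

Lemma run_walk tr0 t p : path adj (last r t) p ->
  run r parent (rcons tr0 t) [seq Step (size tr0) u | u <- p] =
  Some (rcons tr0 (t ++ p)).
Proof.
elim: p t => [|u p IH] t /=; first by rewrite cats0.
case/andP=> tu up; rewrite size_rcons ltnSn nth_rcons ltnn eqxx tu /=.
have -> : set_nth [::] (rcons tr0 t) (size tr0) (rcons t u) = rcons tr0 (rcons t u).
  by elim: tr0 {IH} => //= t0 tr0 ->.
by rewrite IH ?cat_rcons // last_rcons.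
Qed.

Lemma run_root_walks_realizable tr0 tr :
  all root_walk tr -> exists s, run r parent tr0 s = Some (tr0 ++ tr).
Proof.
elim: tr tr0 => [|[//|x t] tr IH] tr0 /=; first by exists [::]; rewrite cats0.
case/andP=> /andP[/eqP -> rt] walks; have [s Es] := IH (rcons tr0 (r :: t)) walks.
exists (Invoke V :: [seq Step (size tr0) u | u <- t] ++ s).
by rewrite /= run_cat run_walk // Es cat_rcons.
Qed.

Lemma root_walks_excursion tr u l :
  all root_walk tr -> covers tr -> anc u l -> ~~ has (fun t => anc u (last r t)) tr ->
  exists tr1 tr2 A F B,
    [/\ u != r, tr = tr1 ++ (r :: A ++ u :: F ++ parent u :: B) :: tr2,
        path adj r A, last r A = parent u &
        [/\ path adj u F, last u F = u, all (anc u) F, l \in u :: F &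
            path adj (parent u) B]].
Proof.
move=> walks cov ul /hasPn outside; have [t0 t0tr lt] := cov l.
have urN : ~~ anc u r.
  by apply: contra (outside t0 t0tr) => ur; apply: anc_trans ur (anc_root _).
have [t Et0 rt] : exists2 t, t0 = r :: t & path adj r t.
  move: (allP walks t0 t0tr).
  by case: t0 {t0tr lt} => // x t /andP[/eqP -> rt]; exists t.
have lastN := outside t0 t0tr; subst t0.
have [tr1 [tr2 ->]] : exists tr1 tr2, tr = tr1 ++ (r :: t) :: tr2.
  by case/splitPr: t0tr => tr1 tr2; exists tr1, tr2.
have {}lt : l \in t.
  by move: lt; rewrite inE => /orP[/eqP lr|//]; move: urN; rewrite -lr ul.
have [A [F [B [Et lastA lastF uF lF]]]] := walk_excursion urN rt lastN lt ul.
move: rt; rewrite Et cat_path lastA /= cat_path lastF /= => /and5P[rA _ uF_path _ vB].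
exists tr1, tr2, A, F, B; split => //.
by apply: contraNneq urN => ->; apply: anc_refl.
Qed.

Lemma covers_replace (tr1 tr2 : seq (seq V)) (t t1 t2 : seq V) :
  covers (tr1 ++ t :: tr2) -> {subset t <= t1 ++ t2} ->
  covers (tr1 ++ t1 :: tr2 ++ [:: t2]).
Proof.
move=> cov sub_t z; have [t' + zt'] := cov z.
rewrite !(mem_cat, inE) => /or3P[t'tr1|/eqP tt'|t'tr2].
- by exists t' => //; rewrite mem_cat t'tr1.
- move: zt'; rewrite tt' => /sub_t; rewrite mem_cat => /orP[zt1|zt2].
    by exists t1; rewrite // mem_cat mem_head orbT.
  by exists t2; rewrite // !(mem_cat, inE) eqxx !orbT.
- by exists t'; rewrite // !(mem_cat, inE) t'tr2 !orbT.
Qed.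

Definition stops_in (u : V) (tr : seq (seq V)) : nat :=
  count (fun t => anc u (last r t)) tr.

Lemma sum_stops_in_children u tr :
  (\sum_(c | child c u) stops_in c tr <= stops_in u tr)%N.
Proof.
elim: tr => [|t tr IH]; first by rewrite big1.
by rewrite /stops_in /= big_split /=; apply: leq_add (sum_child_anc u _) IH.
Qed.

Lemma stops_in_le_agents_in u tr :
  all root_walk tr -> (stops_in u tr <= agents_in parent u tr)%N.
Proof.
elim: tr => [//|t tr IH] /andP[rt walks].
rewrite /stops_in /agents_in /=; apply: leq_add; last exact: IH.
case: t rt => // x t _; case: (boolP (anc u (last r (x :: t)))) => // ut.
suff -> : has (anc u) (x :: t) by [].
by apply/hasP; exists (last x t) => //; apply: mem_last.
Qed.

Section Weights.
Variables (R : realFieldType) (w : V -> R).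

Local Notation depth := (depth r parent w).
Local Notation dist_desc := (dist_desc r parent w).
Local Notation ew := (ew r parent w).
Local Notation path_len := (path_len r parent w).

Lemma depth_aux_stable n x : iter n parent x = r -> forall m, (n <= m)%N ->
  depth_aux r parent w m x = depth_aux r parent w n x.
Proof.
elim: n x => [|n IH] x /= xr [|m] //= le_nm; first by rewrite xr eqxx.
by case: eqP => // _; rewrite (IH (parent x)) // -iterSr.
Qed.

Lemma depth_root : depth r = 0.
Proof.
have : (0 < #|V|)%N by apply/card_gt0P; exists r.
by rewrite /depth; case: #|V| => //= k _; rewrite eqxx.
Qed.

Lemma depth_child c : c != r -> depth c = w c + depth (parent c).
Proof.
move=> cr; have /existsP[[m ltmV] /eqP /= cm] := anc_root c.
rewrite /depth (depth_aux_stable cm (ltnW ltmV)).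
case: m ltmV cm => [|m] ltmV cm; first by move: cr; rewrite -cm eqxx.
rewrite iterSr in cm; rewrite /= (negPf cr) (depth_aux_stable cm) //.
exact: ltnW (ltnW ltmV).
Qed.

Lemma dist_desc_refl a : dist_desc a a = 0.
Proof. exact: subrr. Qed.

Lemma dist_desc_child c a x : child c a -> dist_desc a x = w c + dist_desc c x.
Proof. by case/andP=> cr /eqP ca; rewrite /dist_desc (depth_child cr) ca; lra. Qed.

Lemma ew_to_child c a : child c a -> ew a c = w c.
Proof. by rewrite /ew => ->. Qed.

Lemma ew_to_parent c a : child c a -> ew c a = w c.
Proof. by move=> ca; rewrite /ew (negPf (child_asym ca)). Qed.

Lemma path_len_cat x s1 s2 :
  path_len (x :: s1 ++ s2) = path_len (x :: s1) + path_len (last x s1 :: s2).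
Proof. by rewrite /path_len pairmap_cat big_cat. Qed.

Lemma path_len_cons x y s : path_len (x :: y :: s) = ew x y + path_len (y :: s).
Proof. by rewrite /path_len /= big_cons. Qed.

Lemma root_walk_to x :
  exists p, [/\ path adj r p, last r p = x & path_len (r :: p) = depth x].
Proof.
have /ancP[m xr] := anc_root x; elim: m x xr => [|m IH] x xr.
  by exists [::]; rewrite /= in xr; rewrite xr depth_root /path_len big_nil.
have [->|xrN] := eqVneq x r; first by exists [::]; rewrite depth_root /path_len big_nil.
rewrite iterSr in xr; have [p [rp lastp lenp]] := IH _ xr.
exists (rcons p x); split; first by rewrite rcons_path rp lastp /adj child_parent.
  exact: last_rcons.
rewrite -cats1 path_len_cat lastp lenp path_len_cons ew_to_child ?child_parent //.
by rewrite /path_len big_nil addr0 (depth_child xrN) addrC.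
Qed.

Lemma closed_walk_shortcut a F x :
  path adj a F -> last a F = a -> all (anc a) F -> x \in a :: F ->
  exists2 D, [/\ path adj a D, last a D = x & {subset a :: F <= a :: D}] &
    path_len (a :: D) + dist_desc a x <= path_len (a :: F).
Proof.
have [n] := ubnP (size F); elim: n a F x => // n IH a F x /ltnSE size_F.
move=> aF lastF allF xF; have [->|xa] := eqVneq x a.
  by exists F; [split | rewrite dist_desc_refl addr0].
have ax : anc a x by move: xF; rewrite inE (negPf xa) => /(allP allF).
have [c ca cx] := anc_child_of ax xa.
have ac : a = parent c by case/andP: ca => _ /eqP.
have caN : ~~ anc c a by rewrite ac anc_parentN //; case/andP: ca.
have xF' : x \in F by move: xF; rewrite inE (negPf xa).
have [A [F1 [B [EF lastA lastF1 allF1 xF1]]]] :=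
  walk_excursion caN aF ltac:(by rewrite lastF) xF' cx.
rewrite -ac {xF'} in EF lastA; subst F.
have size_F1 : (size F1 < n)%N by move: size_F; rewrite size_cat /= size_cat /=; lia.
rewrite cat_path lastA /= cat_path lastF1 /= in aF; case/and5P: aF => aA _ cF1 _ aB.
rewrite !last_cat lastA /= last_cat lastF1 /= in lastF.
have [D1 [cD1 lastD1 subD1] lenD1] := IH c F1 x size_F1 cF1 lastF1 allF1 xF1.
exists (A ++ B ++ c :: D1); first split.
- by rewrite !cat_path aA lastA aB lastF /= /adj ca.
- by rewrite !last_cat lastA lastF.
- move=> z; rewrite -cat_cons mem_cat => /orP[zA|].
    by rewrite -cat_cons mem_cat zA.
  rewrite -cat_cons mem_cat => /orP[/subD1 zD1|].
    by rewrite inE !mem_cat zD1 !orbT.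
  by rewrite inE => /orP[/eqP->|zB]; rewrite ?mem_head // inE !mem_cat zB !orbT.
rewrite !(path_len_cat, path_len_cons) lastA lastF lastF1.
rewrite ew_to_child // ew_to_parent // (dist_desc_child x ca).
lra.
Qed.

Lemma cost_replace q (tr1 tr2 : seq (seq V)) (t t1 t2 : seq V) :
  cost r parent w q (tr1 ++ t1 :: tr2 ++ [:: t2]) =
  cost r parent w q (tr1 ++ t :: tr2) + q + path_len t1 + path_len t2 - path_len t.
Proof.
rewrite /cost !size_cat !big_cat /= !big_cons big_cat big_seq1 size_cat /=.
rewrite !(natrD, mulrSr) !mulrDl !mul1r; lra.
Qed.

Lemma cost_optimal_stops_in_far_subtree q s tr u l :
  cost_optimal r parent w q s tr -> anc u l ->
  depth (parent u) + q < dist_desc (parent u) l ->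
  (0 < stops_in u tr)%N.
Proof.
case=> run_s [cov opt] ul far; rewrite -has_count; apply: contraT => stopN.
have walks := run_root_walks run_s.
have [tr1 [tr2 [A [F [B [ur Etr rA lastA [uF_path lastF uF lF vB]]]]]]] :=
  root_walks_excursion walks cov ul stopN.
subst tr; set v := parent u in lastA vB far.
have uv : child u v by apply: child_parent.
have [D [uD lastD subD] lenD] := closed_walk_shortcut uF_path lastF uF lF.
have [p [rp lastp lenp]] := root_walk_to v.
(* t1 is the agent's walk without its excursion into T_u, t2 a fresh agent
   walking down to u and then along the shortcut of the excursion. *)
set t1 := r :: A ++ B; set t2 := r :: p ++ u :: D.
have walks' : all root_walk (tr1 ++ t1 :: tr2 ++ [:: t2]).
  move: walks; rewrite !all_cat /= all_cat /= => /and3P[-> _ ->] /=.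
  by rewrite !eqxx !cat_path rA lastA vB rp lastp /= /adj uv uD.
have [s' run_s'] := run_root_walks_realizable [::] walks'.
have sub_t : {subset r :: A ++ u :: F ++ v :: B <= t1 ++ t2}.
  move=> z; rewrite /t1 /t2 -cat_cons mem_cat => /orP[zrA|].
    by rewrite mem_cat -cat_cons mem_cat zrA.
  rewrite -cat_cons mem_cat => /orP[/subD zD|].
    by rewrite mem_cat orbC -cat_cons mem_cat zD orbT.
  rewrite inE => /orP[/eqP->|zB]; rewrite mem_cat -cat_cons mem_cat ?zB ?orbT //.
  by rewrite -lastA mem_last.
have := opt s' _ run_s' (covers_replace cov sub_t).
rewrite (cost_replace _ _ _ (r :: A ++ u :: F ++ v :: B)) /t1 /t2.
rewrite !(path_len_cat, path_len_cons) lastA lastF lastp lenp.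
rewrite ew_to_child // ew_to_parent // (dist_desc_child l uv) in far *.
lra.
Qed.

Section Labeling.
Variables (q : R) (Lk : V -> nat) (Ll : V -> V) (Lc : V -> option V).
Hypothesis labeling : is_labeling r parent w q Lk Ll Lc.

Lemma anc_Ll u : anc u (Ll u).
Proof.
elim/subtree_ind: u => u IH; have [leaf [_ inner]] := labeling.
have [uleaf|uleafN] := boolP (is_leaf r parent u).
  by have [_ -> _] := leaf u uleaf; apply: anc_refl.
have [->|ur] := eqVneq u r; first exact: anc_root.
have [c cu] : exists c, child c u.
  by move: uleafN; rewrite /is_leaf ur negb_forall => /existsP[c /negPn]; exists c.
have [c' _ [c'u -> _]] := inner u uleafN (ex_intro _ c cu).
exact: anc_trans (child_anc c'u) (IH c' c'u).
Qed.

(* The summand contributed by a child u in SetLabeling: the number of agents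
   that have to terminate inside T_u. *)
Definition demand u : nat :=
  Lk u - ((Lk u == 1%N) && (dist_desc (parent u) (Ll u) <= depth (parent u) + q)).

Lemma Lk_le_max_demand u : (Lk u <= maxn 1 (demand u))%N.
Proof.
by rewrite /demand; case: eqP => [->|_]; rewrite ?leq_maxl // subn0 leq_maxr.
Qed.

Lemma demand_le_stops_in s tr u :
  cost_optimal r parent w q s tr -> (demand u <= stops_in u tr)%N.
Proof.
move=> opt; elim/subtree_ind: u => u IH; have [leaf [inner _]] := labeling.
rewrite /demand; have [Lk1|Lk1N] := eqVneq (Lk u) 1%N.
  rewrite Lk1 /=; case: lerP => // far.
  by rewrite subn0 (cost_optimal_stops_in_far_subtree opt (anc_Ll u)).
have uleafN : ~~ is_leaf r parent u by apply: contra Lk1N => /leaf[->].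
have sum_le : (\sum_(c | child c u) demand c <= stops_in u tr)%N.
  by apply: leq_trans (sum_stops_in_children u tr); exact: leq_sum IH.
move: Lk1N sum_le; rewrite (inner u uleafN) (eq_bigr demand) /=.
  by rewrite subn0; lia.
by move=> c /andP[_ /eqP <-].
Qed.
End Labeling.

End Weights.
End RootedTree.

Theorem lemma3 (R : realFieldType) (V : finType) (r : V) (parent : V -> V) (w : V -> R)
    (q : R) (Lk : V -> nat) (Ll : V -> V) (Lc : V -> option V) :
  rooted_tree r parent w ->
  (forall v, v != r -> #|[set u | child r parent u v]| != 1%N) ->
  0 <= q ->
  is_labeling r parent w q Lk Ll Lc ->
  forall (s : seq (move V)) (tr : seq (seq V)),
    cost_optimal r parent w q s tr ->
    forall v : V, (Lk v <= agents_in parent v tr)%N.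
Proof.
move=> [parent_root [anc_root _]] _ _ labeling s tr opt v.
have [run_s [cov _]] := opt.
have agents_pos : (0 < agents_in parent v tr)%N.
  have [t ttr vt] := cov v; rewrite /agents_in -has_count.
  by apply/hasP; exists t => //; apply/hasP; exists v => //; apply: anc_refl.
apply: leq_trans (Lk_le_max_demand r parent w q Lk Ll v) _.
rewrite geq_max agents_pos /=.
apply: leq_trans (demand_le_stops_in parent_root anc_root labeling v opt) _.
exact: stops_in_le_agents_in (run_root_walks run_s).
Qed.
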